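(* For every $k\ge1$, $$B_k'=\{[f,l]\mid f\in B_k,\ l\in G_k\}=\{[l,f]\mid f\in B_k,\ l\in G_k\}.$$
   Context: Let $C_2=\{e,\sigma\}$ with $\sigma=(1,2)$. Define $B_1=C_2$ and $B_k=B_{k-1}\wr C_2$ for $k>1$, with elements written as wreath recursions $(g_1,g_2)\pi$, $g_1,g_2\in B_{k-1}$, $\pi\in C_2$, and multiplication $(g_1,g_2)\pi\cdot(h_1,h_2)\rho=(g_1h_{\pi(1)},g_2h_{\pi(2)})\pi\rho$. Define $G_1=\{e\}$ and, for $k>1$, $G_k=\{(g_1,g_2)\pi\in B_k : g_1g_2\in G_{k-1}\}$. The commutator is $[a,b]=aba^{-1}b^{-1}$. *)

(* B 0 is the trivial group, so B 1 = B 0 wr C_2 = C_2 (elements (tt,tt,pi)),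
   and B (k+1) = B k wr C_2. *)
Fixpoint B (k : nat) : Type :=
  match k with
  | O => unit
  | S k' => (B k' * B k' * bool)%type
  end.

Fixpoint one (k : nat) : B k :=
  match k return B k with
  | O => tt
  | S k' => (one k', one k', false)
  end.

Fixpoint mul (k : nat) : B k -> B k -> B k :=
  match k return B k -> B k -> B k with
  | O => fun _ _ => tt
  | S k' => fun x y =>
      match x, y with
      | (g1, g2, p), (h1, h2, r) =>
          (mul k' g1 (if p then h2 else h1),
           mul k' g2 (if p then h1 else h2),
           xorb p r)
      end
  end.

Fixpoint inv (k : nat) : B k -> B k :=
  match k return B k -> B k with
  | O => fun _ => tt
  | S k' => fun x =>
      match x with
      | (g1, g2, p) =>
          if p then (inv k' g2, inv k' g1, true)
          else (inv k' g1, inv k' g2, false)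
      end
  end.

Definition comm (k : nat) (a b : B k) : B k :=
  mul k (mul k (mul k a b) (inv k a)) (inv k b).

(* G_1 = {e};  G_k = {(g1,g2)pi | g1 g2 in G_{k-1}} for k > 1.
   (G 0 is never used by the statement.) *)
(* Gs k x  means  x in G_(k+1), for x : B (k+1). *)
Fixpoint Gs (k : nat) : B (S k) -> Prop :=
  match k return B (S k) -> Prop with
  | O => fun x => x = one 1
  | S k' => fun x =>
      match x with
      | (g1, g2, _) => Gs k' (mul (S k') g1 g2)
      end
  end.

Definition G (k : nat) : B k -> Prop :=
  match k return B k -> Prop with
  | O => fun _ => True
  | S k' => Gs k'
  end.

Inductive derived (k : nat) : B k -> Prop :=
  | derived_comm : forall a b, derived k (comm k a b)
  | derived_one : derived k (one k)
  | derived_mul : forall x y, derived k x -> derived k y -> derived k (mul k x y)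
  | derived_inv : forall x, derived k x -> derived k (inv k x).

(* The map [abel] sending an element of B_k to the parities, level by level,
   of its number of nontrivial vertex permutations is a homomorphism to the
   abelian group (Z/2)^k, so it kills B_k'.  Conversely every x in its kernel
   is [f, l] with l in G_k, by induction on k: such an x is (g1, g2) with
   g1 g2 in the kernel one level down, hence g1 g2 = [a, c] with c in G_(k-1),
   and then x = [(a, g1^-1 a), (1, c) sigma].  Since [f, l]^-1 = [l, f], the
   same holds with the commutator reversed. *)


Lemma G_SS k g1 g2 p : G (S (S k)) (g1, g2, p) = G (S k) (mul (S k) g1 g2).
Proof. reflexivity. Qed.

Lemma mul_assoc k : forall x y z : B k, mul k (mul k x y) z = mul k x (mul k y z).
Proof.
  induction k as [|k IH]; [reflexivity|].
  intros [[x1 x2] []] [[y1 y2] []] [[z1 z2] []]; simpl; rewrite !IH; reflexivity.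
Qed.

Lemma mul_1_l k : forall x : B k, mul k (one k) x = x.
Proof.
  induction k as [|k IH]; [intros []; reflexivity|].
  intros [[x1 x2] p]; simpl; rewrite !IH; reflexivity.
Qed.

Lemma mul_1_r k : forall x : B k, mul k x (one k) = x.
Proof.
  induction k as [|k IH]; [intros []; reflexivity|].
  intros [[x1 x2] []]; simpl; rewrite !IH; reflexivity.
Qed.

Lemma mul_inv_r k : forall x : B k, mul k x (inv k x) = one k.
Proof.
  induction k as [|k IH]; [reflexivity|].
  intros [[x1 x2] []]; simpl; rewrite !IH; reflexivity.
Qed.

Lemma mul_inv_l k : forall x : B k, mul k (inv k x) x = one k.
Proof.
  induction k as [|k IH]; [reflexivity|].
  intros [[x1 x2] []]; simpl; rewrite !IH; reflexivity.
Qed.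

Lemma inv_1 k : inv k (one k) = one k.
Proof. induction k as [|k IH]; [reflexivity|]; simpl; rewrite IH; reflexivity. Qed.

Lemma inv_involutive k : forall x : B k, inv k (inv k x) = x.
Proof.
  induction k as [|k IH]; [intros []; reflexivity|].
  intros [[x1 x2] []]; simpl; rewrite !IH; reflexivity.
Qed.

Lemma inv_mul k : forall x y : B k, inv k (mul k x y) = mul k (inv k y) (inv k x).
Proof.
  induction k as [|k IH]; [reflexivity|].
  intros [[x1 x2] []] [[y1 y2] []]; simpl; rewrite !IH; reflexivity.
Qed.

Lemma inv_comm k a b : inv k (comm k a b) = comm k b a.
Proof. unfold comm; rewrite !inv_mul, !inv_involutive, !mul_assoc; reflexivity. Qed.

Lemma comm_with_swap k a b c :
  comm (S k) (a, b, false) (one k, c, true) =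
  (mul k a (inv k b), mul k (mul k b (inv k a)) (comm k a c), false).
Proof.
  unfold comm; simpl; rewrite inv_1, !mul_1_r.
  do 2 f_equal; rewrite !mul_assoc, <- (mul_assoc k (inv k a) a), mul_inv_l, mul_1_l.
  reflexivity.
Qed.

Fixpoint vec (k : nat) : Type :=
  match k with O => unit | S k' => (vec k' * bool)%type end.

Fixpoint vzero (k : nat) : vec k :=
  match k return vec k with O => tt | S k' => (vzero k', false) end.

Fixpoint vadd (k : nat) : vec k -> vec k -> vec k :=
  match k return vec k -> vec k -> vec k with
  | O => fun _ _ => tt
  | S k' => fun u v => (vadd k' (fst u) (fst v), xorb (snd u) (snd v))
  end.

Lemma vadd_comm k : forall u v : vec k, vadd k u v = vadd k v u.
Proof.
  induction k as [|k IH]; [reflexivity|].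
  intros [u []] [v []]; simpl; rewrite IH; reflexivity.
Qed.

Lemma vadd_assoc k : forall u v w : vec k, vadd k (vadd k u v) w = vadd k u (vadd k v w).
Proof.
  induction k as [|k IH]; [reflexivity|].
  intros [u []] [v []] [w []]; simpl; rewrite IH; reflexivity.
Qed.

Lemma vadd_0_l k : forall u : vec k, vadd k (vzero k) u = u.
Proof.
  induction k as [|k IH]; [intros []; reflexivity|].
  intros [u p]; simpl; rewrite IH; reflexivity.
Qed.

Lemma vadd_diag k : forall u : vec k, vadd k u u = vzero k.
Proof.
  induction k as [|k IH]; [reflexivity|].
  intros [u []]; simpl; rewrite IH; reflexivity.
Qed.

Lemma vadd_shuffle1 k u v w z :
  vadd k (vadd k u v) (vadd k w z) = vadd k (vadd k u w) (vadd k v z).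
Proof.
  rewrite !vadd_assoc; f_equal.
  rewrite <- !vadd_assoc, (vadd_comm k v w); reflexivity.
Qed.

Fixpoint abel (k : nat) : B k -> vec k :=
  match k return B k -> vec k with
  | O => fun _ => tt
  | S k' => fun x =>
      match x with (g1, g2, p) => (vadd k' (abel k' g1) (abel k' g2), p) end
  end.

Lemma abel_S k g1 g2 p :
  abel (S k) (g1, g2, p) = (vadd k (abel k g1) (abel k g2), p).
Proof. reflexivity. Qed.

Lemma abel_mul k : forall x y : B k, abel k (mul k x y) = vadd k (abel k x) (abel k y).
Proof.
  induction k as [|k IH]; [reflexivity|].
  intros [[x1 x2] []] [[y1 y2] r]; simpl; rewrite !IH, vadd_shuffle1;
    [rewrite (vadd_comm k (abel k y2))|]; reflexivity.
Qed.

Lemma abel_inv k : forall x : B k, abel k (inv k x) = abel k x.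
Proof.
  induction k as [|k IH]; [reflexivity|].
  intros [[x1 x2] []]; simpl; rewrite !IH; [rewrite vadd_comm|]; reflexivity.
Qed.

Lemma abel_1 k : abel k (one k) = vzero k.
Proof. induction k as [|k IH]; [reflexivity|]; simpl; rewrite IH, vadd_diag; reflexivity. Qed.

Lemma abel_comm k a b : abel k (comm k a b) = vzero k.
Proof.
  unfold comm; rewrite !abel_mul, !abel_inv.
  rewrite (vadd_comm k (abel k a) (abel k b)), (vadd_assoc k (abel k b)), vadd_diag.
  rewrite (vadd_comm k (abel k b)), vadd_0_l, vadd_diag; reflexivity.
Qed.

Lemma abel_derived k x : derived k x -> abel k x = vzero k.
Proof.
  induction 1 as [a b| |x y _ Hx _ Hy|x _ Hx].
  - apply abel_comm.
  - apply abel_1.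
  - rewrite abel_mul, Hx, Hy; apply vadd_0_l.
  - rewrite abel_inv; exact Hx.
Qed.

Lemma comm_G_of_abel_eq0 k :
  forall x : B (S k), abel (S k) x = vzero (S k) ->
  exists f l, G (S k) l /\ x = comm (S k) f l.
Proof.
  induction k as [|k IH].
  - intros [[[] []] p] Hx; injection Hx as ->.
    exists (one 1), (one 1); split; reflexivity.
  - intros [[g1 g2] p] Hx; rewrite abel_S in Hx; apply pair_equal_spec in Hx as [Hg ->].
    rewrite <- abel_mul in Hg.
    destruct (IH _ Hg) as [a [c [Hc Hac]]].
    exists (a, mul (S k) (inv (S k) g1) a, false), (one (S k), c, true); split.
    + rewrite G_SS, mul_1_l; exact Hc.
    + rewrite comm_with_swap, <- Hac; do 2 f_equal.
      * rewrite inv_mul, inv_involutive, <- mul_assoc, mul_inv_r, mul_1_l.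
        reflexivity.
      * rewrite (mul_assoc _ (inv _ g1)), mul_inv_r, mul_1_r, <- mul_assoc,
          mul_inv_l, mul_1_l.
        reflexivity.
Qed.

Lemma derived_iff_comm_G k (x : B (S k)) :
  derived (S k) x <-> exists f l, G (S k) l /\ x = comm (S k) f l.
Proof.
  split.
  - intros Dx; apply comm_G_of_abel_eq0, abel_derived, Dx.
  - intros [f [l [_ ->]]]; apply derived_comm.
Qed.

Lemma derived_iff_comm_G_rev k (x : B (S k)) :
  derived (S k) x <-> exists f l, G (S k) l /\ x = comm (S k) l f.
Proof.
  split.
  - intros Dx.
    destruct (proj1 (derived_iff_comm_G k _) (derived_inv _ _ Dx)) as [f [l [Hl Hx]]].
    exists f, l; split; [exact Hl|].
    rewrite <- inv_comm, <- Hx, inv_involutive; reflexivity.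
  - intros [f [l [_ ->]]]; apply derived_comm.
Qed.

Theorem mainTheorem14 (k : nat) (hk : 1 <= k) :
  (forall x : B k,
     derived k x <-> exists (f l : B k), G k l /\ x = comm k f l) /\
  (forall x : B k,
     derived k x <-> exists (f l : B k), G k l /\ x = comm k l f).
Proof.
  destruct k as [|k]; [inversion hk|].
  split; [apply derived_iff_comm_G | apply derived_iff_comm_G_rev].
Qed.
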